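(* Let $\oplus$ be a combinator whose domain is the set of all pairs of tpos over $W$. Then $\oplus$ is a TeamQueue combinator if and only if $\oplus$ is basic and satisfies ($\oplus$TRI): for every pair $\langle\preceq_1,\preceq_2\rangle$ and every $S \subseteq W$, $\min(\preceq_{1\oplus 2}, S)$ is equal to one of $\min(\preceq_1, S)$, $\min(\preceq_2, S)$, or $\min(\preceq_1, S) \cup \min(\preceq_2, S)$.
   Context: $W$ is a finite nonempty set (of possible worlds). A tpo is a total preorder on $W$. For $S \subseteq W$, $\min(\preceq, S) = \{x \in S : x \preceq y \text{ for all } y \in S\}$. A combinator $\oplus$ maps pairs of tpos $\langle\preceq_1,\preceq_2\rangle$ in its domain to a tpo $\preceq_{1\oplus 2}$. It is basic if $\min(\preceq_{1\oplus 2}, W) = \min(\preceq_1, W) \cup \min(\preceq_2, W)$ for every pair in its domain. $\oplus$ is a TeamQueue combinator if for each pair $\langle\preceq_1,\preceq_2\rangle$ in its domain there is a sequence $\langle a(i)\rangle_{i \in \mathbb{N}}$ (depending on the pair) with $\emptyset \neq a(i) \subseteq \{1,2\}$ for all $i$ and $a(1) = \{1,2\}$, such that $\preceq_{1\oplus 2}$ is the tpo whose ordered partition into ranks (most plausible first) is $\langle T_1, \ldots, T_m\rangle$, where inductively $T_i = \bigcup_{j \in a(i)} \min(\preceq_j, \bigcap_{k<i} T_k^c)$ ($T^c$ the complement in $W$) and $m$ is minimal with $\bigcup_{i \le m} T_i = W$. *)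

From mathcomp Require Import all_boot.
Set Implicit Arguments. Unset Strict Implicit. Unset Printing Implicit Defensive.

Record tpo (W : finType) := Tpo {
  tpo_le :> rel W;
  tpo_total : total tpo_le;
  tpo_trans : transitive tpo_le }.

Definition minS (W : finType) (r : rel W) (S : {set W}) : {set W} :=
  [set x in S | [forall y in S, r x y]].

Definition combinator (W : finType) := tpo W -> tpo W -> tpo W.

Definition basic (W : finType) (comb : combinator W) : Prop :=
  forall p q : tpo W,
    minS (comb p q) setT = minS p setT :|: minS q setT.

Definition TRI (W : finType) (comb : combinator W) : Prop :=
  forall (p q : tpo W) (S : {set W}),
    minS (comb p q) S = minS p S \/
    minS (comb p q) S = minS q S \/
    minS (comb p q) S = minS p S :|: minS q S.

(* A subset a(i) of {1,2} is encoded as a pair of booleans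
   (1 \in a(i), 2 \in a(i)). *)
Definition block (W : finType) (r1 r2 : rel W) (ab : bool * bool)
    (C : {set W}) : {set W} :=
  (if ab.1 then minS r1 C else set0) :|: (if ab.2 then minS r2 C else set0).

(* cum r1 r2 a n = T_1 ∪ ... ∪ T_n  (the sequence a is indexed from 0,
   so a k plays the role of a(k+1) of the paper, and the block
   T_{k+1} is  block r1 r2 (a k) (~: cum r1 r2 a k)). *)
Fixpoint cum (W : finType) (r1 r2 : rel W) (a : nat -> bool * bool)
    (n : nat) : {set W} :=
  match n with
  | 0 => set0
  | k.+1 => cum r1 r2 a k :|: block r1 r2 (a k) (~: cum r1 r2 a k)
  end.

Definition Tblock (W : finType) (r1 r2 : rel W) (a : nat -> bool * bool)
    (k : nat) : {set W} :=
  block r1 r2 (a k) (~: cum r1 r2 a k).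

(* The tpo r has ordered partition <T_1,...,T_m> (m minimal with
   T_1 ∪ ... ∪ T_m = W): x r y iff the rank of x is at most the rank of y. *)
Definition has_rank_partition (W : finType) (r r1 r2 : rel W)
    (a : nat -> bool * bool) : Prop :=
  exists m : nat,
    cum r1 r2 a m = setT /\
    (forall m', m' < m -> cum r1 r2 a m' != setT) /\
    (forall x y : W, r x y <->
       exists k, k < m /\ x \in Tblock r1 r2 a k /\ y \notin cum r1 r2 a k).

Definition TeamQueue (W : finType) (comb : combinator W) : Prop :=
  forall p q : tpo W,
    exists a : nat -> bool * bool,
      (forall i, (a i).1 || (a i).2) /\
      a 0 = (true, true) /\
      has_rank_partition (comb p q) p q a.

From mathcomp Require Import all_boot.

Set Implicit Arguments. Unset Strict Implicit. Unset Printing Implicit Defensive.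

(* For the forward direction, a set S meets the partition of a TeamQueue
   order c first in some block T_k, and min(c, S) = S ∩ T_k; since T_k is a
   union of min(p, C) and/or min(q, C) with S ⊆ C, intersecting with S yields
   min(p, S), min(q, S) or their union.  Basicness is the case S = W, k = 0.
   Conversely, the ranks of c are its successive minimal layers
   min(c, W \ (L_1 ∪ ... ∪ L_k)); by (TRI) each of them is a block for a
   suitable a(k), and by basicness a(1) = {1,2}. *)

Section MinS.
Variable W : finType.

Lemma minSP (r : rel W) (S : {set W}) x :
  reflect (x \in S /\ forall y, y \in S -> r x y) (x \in minS r S).
Proof. by rewrite inE; apply: (iffP andP) => -[Sx /forall_inP]. Qed.

Lemma minS_sub (r : rel W) (S : {set W}) : minS r S \subset S.
Proof. by apply/subsetP => x /minSP[]. Qed.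

Lemma minS0 (r : rel W) : minS r set0 = set0.
Proof. by apply/setP => x; rewrite !inE. Qed.

Lemma minS_nonempty (r : tpo W) (S : {set W}) :
  S != set0 -> exists x, x \in minS r S.
Proof.
move=> /set0Pn[x0 Sx0].
have perm_s : perm_eq (sort r (enum S)) (enum S) by rewrite perm_sort.
have := sort_sorted (@tpo_total _ r) (enum S).
move: perm_s; case: (sort r (enum S)) => [|x s] perm_s.
  by have := perm_mem perm_s x0; rewrite mem_enum Sx0 in_nil.
move=> /(order_path_min (@tpo_trans _ r)) /allP x_min.
exists x; apply/minSP; rewrite -mem_enum -(perm_mem perm_s) mem_head.
split=> // y; rewrite -mem_enum -(perm_mem perm_s) in_cons.
by case/predU1P=> [->|/x_min//]; case/orP: (tpo_total r x x).
Qed.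

Lemma minS_setIS (r : tpo W) (S C : {set W}) :
  S \subset C -> S :&: minS r C != set0 -> minS r S = S :&: minS r C.
Proof.
move=> sSC /set0Pn[z /setIP[Sz /minSP[_ z_min]]].
apply/setP => x; rewrite in_setI; apply/minSP/andP => [[Sx x_min]|].
  split=> //; apply/minSP; split=> [|y Cy]; first exact: subsetP sSC x Sx.
  exact: tpo_trans (x_min z Sz) (z_min y Cy).
by case=> Sx /minSP[_ x_min]; split=> // y Sy; apply/x_min/(subsetP sSC).
Qed.

Definition trichotomous (c r1 r2 : rel W) : Prop :=
  forall S : {set W}, minS c S = minS r1 S \/ minS c S = minS r2 S \/
                      minS c S = minS r1 S :|: minS r2 S.

Lemma trichotomous_block (p q : tpo W) ab (C S : {set W}) :
  S \subset C -> ab.1 || ab.2 -> S :&: block p q ab C != set0 ->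
  let B := S :&: block p q ab C in
  B = minS p S \/ B = minS q S \/ B = minS p S :|: minS q S.
Proof.
rewrite /block; case: ab => [[] []] //= sSC _; rewrite ?setU0 ?set0U ?setIUr.
- have [/eqP-> | p_meets] := boolP (S :&: minS p C == set0);
  have [/eqP-> | q_meets] := boolP (S :&: minS q C == set0).
  + by rewrite setU0 eqxx.
  + by move=> _; right; left; rewrite set0U (minS_setIS sSC q_meets).
  + by move=> _; left; rewrite setU0 (minS_setIS sSC p_meets).
  + move=> _; right; right.
    by rewrite (minS_setIS sSC p_meets) (minS_setIS sSC q_meets).
- by move=> p_meets; left; rewrite (minS_setIS sSC p_meets).
- by move=> q_meets; right; left; rewrite (minS_setIS sSC q_meets).
Qed.

End MinS.

Section Blocks.
Variables (W : finType) (r1 r2 : rel W) (a : nat -> bool * bool).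
Local Notation cum := (cum r1 r2 a).
Local Notation T := (Tblock r1 r2 a).

Lemma block_sub ab (C : {set W}) : block r1 r2 ab C \subset C.
Proof. by rewrite subUset; case: ab.1; case: ab.2; rewrite ?sub0set ?minS_sub. Qed.

Lemma cum_mono m n : m <= n -> cum m \subset cum n.
Proof.
elim: n => [|n IHn]; first by rewrite leqn0 => /eqP->.
rewrite leq_eqVlt => /predU1P[->//|/IHn sub_mn].
exact: subset_trans sub_mn (subsetUl _ _).
Qed.

Lemma Tblock_sub_cum k : T k \subset cum k.+1.
Proof. exact: subsetUr. Qed.

Lemma Tblock_notin_cum k x : x \in T k -> x \notin cum k.
Proof. by move/(subsetP (block_sub _ _)); rewrite inE. Qed.

Lemma cum_Tblock n x : x \in cum n -> exists2 k, k < n & x \in T k.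
Proof.
elim: n => [|n IHn] /=; first by rewrite inE.
by case/setUP=> [/IHn[k lt_kn Tk]|]; [exists k => //; exact: ltnW | exists n].
Qed.

Lemma Tblock_uniq x j k : x \in T j -> x \in T k -> j = k.
Proof.
have Tblock_lt i l : i < l -> x \in T i -> x \notin T l.
  move=> lt_il /(subsetP (Tblock_sub_cum i)) /(subsetP (cum_mono lt_il)).
  by apply: contraL; apply: Tblock_notin_cum.
move=> Tj Tk; case: (ltngtP j k) => // [lt_jk|lt_kj].
  by have := Tblock_lt _ _ lt_jk Tj; rewrite Tk.
by have := Tblock_lt _ _ lt_kj Tk; rewrite Tj.
Qed.

Lemma mem_cum_Tblock x k n : x \in T k -> (x \in cum n) = (k < n).
Proof.
move=> Tk; apply/idP/idP => [/cum_Tblock[j lt_jn /(Tblock_uniq Tk)->//]|lt_kn].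
exact: subsetP (cum_mono lt_kn) _ (subsetP (Tblock_sub_cum k) _ Tk).
Qed.

End Blocks.

Section TeamQueueOrder.
Variables (W : finType) (p q c : tpo W) (a : nat -> bool * bool) (m : nat).
Hypothesis cum_m : cum p q a m = setT.
Hypothesis c_rank : forall x y, c x y <->
  exists k, k < m /\ x \in Tblock p q a k /\ y \notin cum p q a k.

Lemma minS_Tblock (S : {set W}) x : x \in minS c S ->
  exists k, [/\ S \subset ~: cum p q a k, minS c S = S :&: Tblock p q a k
               & x \in Tblock p q a k].
Proof.
move=> /minSP[Sx x_min].
have [k lt_km Tk] : exists2 k, k < m & x \in Tblock p q a k.
  by apply: cum_Tblock; rewrite cum_m inE.
have S_above : S \subset ~: cum p q a k.
  apply/subsetP => y Sy; rewrite inE.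
  by have [j [_ [/(Tblock_uniq Tk)-> ?]]] := (c_rank x y).1 (x_min y Sy).
exists k; split=> //; apply/setP => z; rewrite in_setI.
apply/idP/andP => [/minSP[Sz z_min] | [Sz Tz]].
  have [j [_ [Tj x_above]]] := (c_rank z x).1 (z_min x Sx).
  have := subsetP S_above z Sz; rewrite inE (mem_cum_Tblock _ Tj) -leqNgt.
  rewrite (mem_cum_Tblock _ Tk) -leqNgt in x_above => le_kj.
  by split=> //; rewrite (_ : k = j) //; apply/anti_leq; rewrite le_kj.
apply/minSP; split=> // y Sy; apply/c_rank; exists k.
by have := subsetP S_above y Sy; rewrite inE.
Qed.

Lemma TeamQueue_basic : [set: W] != set0 -> a 0 = (true, true) ->
  minS c setT = minS p setT :|: minS q setT.
Proof.
move=> W_nonempty a0.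
have [x /minS_Tblock[k [W_above -> _]]] := minS_nonempty c W_nonempty.
have Tblock0 : Tblock p q a 0 = minS p setT :|: minS q setT.
  by rewrite /Tblock a0 /= setC0.
have [y p_min_y] := minS_nonempty p W_nonempty.
have T0y : y \in Tblock p q a 0 by rewrite Tblock0 inE p_min_y.
have := subsetP W_above y (in_setT y).
by rewrite inE (mem_cum_Tblock _ T0y) lt0n negbK => /eqP->; rewrite setTI.
Qed.

Lemma TeamQueue_trichotomous : (forall i, (a i).1 || (a i).2) ->
  trichotomous c p q.
Proof.
move=> a_nonempty S; have [/eqP-> | S_nonempty] := boolP (S == set0).
  by left; rewrite !minS0.
have [x c_min_x] := minS_nonempty c S_nonempty.
have [k [S_above -> Tk]] := minS_Tblock c_min_x.
apply: trichotomous_block S_above (a_nonempty k) _.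
by apply/set0Pn; exists x; rewrite inE Tk (subsetP (minS_sub _ _) x c_min_x).
Qed.

End TeamQueueOrder.

Section MinimalLayers.
Variables (W : finType) (c : tpo W) (r1 r2 : rel W) (a : nat -> bool * bool).
Local Notation cum := (cum r1 r2 a).
Local Notation T := (Tblock r1 r2 a).
Hypothesis Tblock_minS : forall k, T k = minS c (~: cum k).

Lemma card_cum n : cum n != setT -> n <= #|cum n|.
Proof.
elim: n => // n IHn cum_Sn_proper.
have cum_n_proper : cum n != setT.
  by apply: contraNneq cum_Sn_proper => /= ->; rewrite setTU.
apply: leq_ltn_trans (IHn cum_n_proper) (proper_card _).
apply/properP; split; first exact: subsetUl.
have [|y c_min_y] := minS_nonempty c (S := ~: cum n).
  by apply: contraNneq cum_n_proper => /(congr1 (@setC _)); rewrite setCK setC0 => ->.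
exists y; first by rewrite /= -Tblock_minS in c_min_y; rewrite inE c_min_y orbT.
by have := subsetP (minS_sub _ _) y c_min_y; rewrite inE.
Qed.

Lemma cum_cover : exists n, cum n == setT.
Proof. by exists #|W|.+1; apply: contraT => /card_cum; rewrite ltnNge max_card. Qed.

Lemma rank_partition_minS : has_rank_partition c r1 r2 a.
Proof.
have [m cum_m m_min] := ex_minnP cum_cover.
exists m; split; first exact/eqP.
split=> [m' lt_m'm | x y]; first by apply/negP => /m_min; rewrite leqNgt lt_m'm.
have [k lt_km Tk] : exists2 k, k < m & x \in T k.
  by apply: cum_Tblock; rewrite (eqP cum_m) inE.
split=> [c_xy | [j [_ [Tj y_above]]]]; last first.
  by move: Tj; rewrite Tblock_minS => /minSP[_]; apply; rewrite inE.
exists k; split=> //; split=> //; apply/negP => /cum_Tblock[j lt_jk Tj].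
have Tj_x : x \in T j.
  rewrite Tblock_minS; apply/minSP; split.
    by rewrite inE (mem_cum_Tblock _ Tk) -leqNgt ltnW.
  by move: Tj; rewrite Tblock_minS => /minSP[_ y_min] z /y_min; apply: tpo_trans c_xy.
by move: lt_jk; rewrite (Tblock_uniq Tk Tj_x) ltnn.
Qed.

End MinimalLayers.

Section LayerChoice.
Variables (W : finType) (c p q : rel W).

Definition choose_ab (C : {set W}) : bool * bool :=
  if minS c C == minS p C :|: minS q C then (true, true)
  else if minS c C == minS p C then (true, false) else (false, true).

Fixpoint min_layers n : {set W} :=
  if n is k.+1 then min_layers k :|: minS c (~: min_layers k) else set0.

Definition layer_choice k := choose_ab (~: min_layers k).

Lemma layer_choice_nonempty k : (layer_choice k).1 || (layer_choice k).2.
Proof. by rewrite /layer_choice /choose_ab; case: ifP => //; case: ifP. Qed.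

Lemma layer_choice0 : minS c setT = minS p setT :|: minS q setT ->
  layer_choice 0 = (true, true).
Proof. by rewrite /layer_choice /choose_ab /= setC0 => ->; rewrite eqxx. Qed.

Hypothesis c_tri : trichotomous c p q.

Lemma block_choose_ab C : block p q (choose_ab C) C = minS c C.
Proof.
rewrite /choose_ab /block; case: eqP => [-> // | not_union].
case: eqP => [-> | not_p]; first by rewrite setU0.
by rewrite set0U; case: (c_tri C) => [/not_p | [-> | /not_union]].
Qed.

Lemma cum_layer_choice n : cum p q layer_choice n = min_layers n.
Proof. by elim: n => //= n ->; rewrite block_choose_ab. Qed.

Lemma Tblock_layer_choice k :
  Tblock p q layer_choice k = minS c (~: cum p q layer_choice k).
Proof. by rewrite /Tblock cum_layer_choice block_choose_ab. Qed.

End LayerChoice.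

Theorem proposition4 (W : finType) (HW : 0 < #|W|) (comb : combinator W) :
  TeamQueue comb <-> basic comb /\ TRI comb.
Proof.
have W_nonempty : [set: W] != set0 by rewrite -cards_eq0 cardsT -lt0n.
split=> [TQ | [comb_basic comb_tri] p q].
  split=> p q; have [a [a_nonempty [a0 [m [cum_m [_ c_rank]]]]]] := TQ p q.
    exact: TeamQueue_basic cum_m c_rank W_nonempty a0.
  exact: TeamQueue_trichotomous cum_m c_rank a_nonempty.
exists (layer_choice (comb p q) p q); split; first exact: layer_choice_nonempty.
split; first exact/layer_choice0/comb_basic.
exact/rank_partition_minS/Tblock_layer_choice/comb_tri.
Qed.
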